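(* Let $X,Y$ be finite nonempty sets, $A\in\{0,1\}^{X\times Y}$, $\delta,\epsilon>0$, integers $k,\ell\ge1$, and assume $\|A\|_{U(k,\ell)}\ge(1+\epsilon)\delta$. Then at least one of the following holds: (1) $|\{x\in X:\deg_A(x)\ge\delta\}|\ge\frac{\epsilon}{2}\delta^{k\ell}|X|$; (2) $k>1$ and there is $x\in X$ with $\deg_A(x)\ge\delta^k$ and $\|A_x\|_{U(k-1,\ell)}\ge(1+\epsilon)\delta$.
   Context: $\deg_A(x)=\frac{1}{|Y|}\sum_{y\in Y}A(x,y)$. $Y_x=\{y\in Y:A(x,y)=1\}$ and $A_x=A[X,Y_x]$ is the submatrix of $A$ with all rows and columns $Y_x$. The $(k,\ell)$-grid norm of $M\in\mathbb{R}_{\ge0}^{X\times Y'}$ is $\|M\|_{U(k,\ell)}=\big(\mathbb{E}_{x_1,\dots,x_k\in X,\,y_1,\dots,y_\ell\in Y'}\prod_{i\in[k],j\in[\ell]}M(x_i,y_j)\big)^{1/(k\ell)}$, expectations over independent uniform choices. *)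

From HB Require Import structures.
From mathcomp Require Import all_boot all_order all_algebra.
From mathcomp Require Import reals exp.
Set Implicit Arguments. Unset Strict Implicit. Unset Printing Implicit Defensive.
Import Order.TTheory GRing.Theory Num.Theory.
Local Open Scope ring_scope.

Definition deg (R : realType) (X Y : finType) (A : X -> Y -> bool) (x : X) : R :=
  (\sum_(y : Y) (A x y)%:R) / #|Y|%:R.

Definition Ycol (X Y : finType) (A : X -> Y -> bool) (x : X) : {set Y} :=
  [set y | A x y].

(* E_{x_1..x_k in X, y_1..y_l in S} prod_{i,j} A(x_i,y_j), for the
   submatrix A[X,S] (uniform independent choices). *)
Definition gridE (R : realType) (X Y : finType) (k l : nat)
    (A : X -> Y -> bool) (S : {set Y}) : R :=
  (\sum_(xs : {ffun 'I_k -> X})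
     \sum_(ys : {ffun 'I_l -> Y} | [forall j, ys j \in S])
        \prod_(i < k) \prod_(j < l) (A (xs i) (ys j))%:R)
  / (#|X|%:R ^+ k * #|S|%:R ^+ l).

Definition gridnorm (R : realType) (X Y : finType) (k l : nat)
    (A : X -> Y -> bool) (S : {set Y}) : R :=
  powR (gridE R k l A S) (1 / (k * l)%:R).

From HB Require Import structures.
From mathcomp Require Import all_boot all_order all_algebra.
From mathcomp Require Import reals exp.
From mathcomp Require Import ring lra.
Import Order.TTheory GRing.Theory Num.Theory.
Local Open Scope ring_scope.

(* Splitting off the first row variable [x_1], the grid sum of [A] becomes a
   sum over [x] of grid sums of [A_x] with one row fewer, and each of these,
   normalised, is [deg_A(x)^l ||A_x||_{U(k-1,l)}^{(k-1)l}]: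
     ||A||^{kl} = E_x deg_A(x)^l ||A_x||^{(k-1)l}.
   If (2) fails, every [x] contributes at most [(1+eps)^{(k-1)l} delta^{kl}],
   plus [1] when [deg_A(x) >= delta]; comparing with
   ||A||^{kl} >= (1+eps)^{kl} delta^{kl} leaves a proportion at least
   [((1+eps)^{kl} - (1+eps)^{(k-1)l}) delta^{kl} >= eps delta^{kl}] of rows of
   large degree. *)

Lemma sumr_indicator (R : numDomainType) (I : finType) (b : pred I) :
  \sum_i ((b i)%:R : R) = #|[set i | b i]|%:R.
Proof.
rewrite -sumr_const [RHS]big_mkcond; apply: eq_bigr => i _.
by rewrite inE; case: (b i).
Qed.

Lemma prodr_indicator (R : numDomainType) (I : finType) (b : pred I) :
  \prod_i ((b i)%:R : R) = [forall i, b i]%:R.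
Proof.
have [/forallP b_all | ] := boolP [forall i, b i].
  by rewrite big1 // => i _; rewrite b_all.
rewrite negb_forall => /existsP [i /negbTE bi].
by rewrite (bigD1 i) //= bi mul0r.
Qed.

Lemma expr1D_gap (R : realDomainType) (e : R) (m l : nat) :
  0 <= e -> (0 < l)%N -> e <= (1 + e) ^+ (l + m) - (1 + e) ^+ m.
Proof.
move=> e_ge0; case: l => // l _.
have ge1 n : 1 <= (1 + e) ^+ n by rewrite exprn_ege1 // lerDl.
have step : e <= (1 + e) * (1 + e) ^+ l - 1.
  by have := ge1 l; nra.
have := ge1 m; rewrite exprD exprS; nra.
Qed.

Section FfunCons.

Context {T : Type} {k : nat}.

Definition ffun_cons (x : T) (f : {ffun 'I_k -> T}) : {ffun 'I_k.+1 -> T} :=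
  [ffun i => if unlift ord0 i is Some j then f j else x].

Lemma ffun_cons0 x f : ffun_cons x f ord0 = x.
Proof. by rewrite ffunE unlift_none. Qed.

Lemma ffun_cons_lift x f j : ffun_cons x f (lift ord0 j) = f j.
Proof. by rewrite ffunE liftK. Qed.

Lemma ffun_cons_bij : bijective (fun p : T * {ffun 'I_k -> T} => ffun_cons p.1 p.2).
Proof.
exists (fun f : {ffun 'I_k.+1 -> T} => (f ord0, [ffun j => f (lift ord0 j)])).
  by move=> [x f]; rewrite /= ffun_cons0; congr pair; apply/ffunP => j;
    rewrite ffunE ffun_cons_lift.
move=> f; apply/ffunP => i; rewrite ffunE.
by case: unliftP => [j -> | ->]; rewrite ?ffunE.
Qed.

End FfunCons.

Lemma sum_ffun_cons (V : nmodType) (T : finType) k (F : {ffun 'I_k.+1 -> T} -> V) :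
  \sum_f F f = \sum_x \sum_f F (ffun_cons x f).
Proof.
rewrite (reindex _ (onW_bij _ (@ffun_cons_bij T k))) pair_bigA /=.
by apply: eq_bigr => -[].
Qed.

Section GridNorm.

Context {R : realType} {X Y : finType} (A : X -> Y -> bool).

Definition gridsum (k l : nat) (S : {set Y}) : R :=
  \sum_(xs : {ffun 'I_k -> X})
     \sum_(ys : {ffun 'I_l -> Y} | [forall j, ys j \in S])
        \prod_(i < k) \prod_(j < l) (A (xs i) (ys j))%:R.

Lemma gridEE k l S :
  gridE R k l A S = gridsum k l S / (#|X|%:R ^+ k * #|S|%:R ^+ l).
Proof. by []. Qed.

Lemma gridsum_cons k l :
  gridsum k.+1 l [set: Y] = \sum_x gridsum k l (Ycol A x).
Proof.
rewrite /gridsum sum_ffun_cons; apply: eq_bigr => x _; apply: eq_bigr => f _.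
rewrite (eq_bigl predT) => [|ys]; last by apply/forallP => j; rewrite inE.
rewrite [RHS]big_mkcond; apply: eq_bigr => ys _; rewrite big_ord_recl.
under eq_bigr do rewrite ffun_cons0.
rewrite prodr_indicator (eq_forallb (fun j => esym (in_set _ (ys j)))).
case: ifP => _; last by rewrite mul0r.
by rewrite mul1r; apply: eq_bigr => i _; rewrite ffun_cons_lift.
Qed.

Lemma gridsum_ge0 k l S : 0 <= gridsum k l S.
Proof.
apply: sumr_ge0 => xs _; apply: sumr_ge0 => ys _.
by apply: prodr_ge0 => i _; apply: prodr_ge0 => j _.
Qed.

Lemma gridsum_le k l S : gridsum k l S <= #|X|%:R ^+ k * #|S|%:R ^+ l.
Proof.
apply: (@le_trans _ _ (\sum_(xs : {ffun 'I_k -> X})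
    \sum_(ys : {ffun 'I_l -> Y} | ys \in ffun_on S) 1)).
  apply: ler_sum => xs _.
  rewrite (eq_bigl (fun ys : {ffun 'I_l -> Y} => ys \in ffun_on S)) => [|ys];
    last by apply/forallP/ffun_onP.
  apply: ler_sum => ys _; apply: prodr_ile1 => i _.
  by rewrite prodr_ge0 ?prodr_ile1 // => j _; rewrite ler0n lern1 leq_b1.
under eq_bigr do rewrite sumr_const card_ffun_on card_ord.
by rewrite sumr_const card_ffun card_ord -[_ *+ _]mulr_natr !natrX mulrC.
Qed.

Lemma gridE_ge0 k l S : 0 <= gridE R k l A S.
Proof. by rewrite gridEE divr_ge0 ?gridsum_ge0 ?mulr_ge0 ?exprn_ge0. Qed.

Lemma gridE_le1 k l S : gridE R k l A S <= 1.
Proof.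
rewrite gridEE; have [-> | nz] := eqVneq (#|X|%:R ^+ k * #|S|%:R ^+ l : R) 0.
  by rewrite invr0 mulr0.
rewrite ler_pdivrMr ?mul1r ?gridsum_le //.
by rewrite lt_def nz mulr_ge0 ?exprn_ge0 ?ler0n.
Qed.

Lemma gridnormXn k l S :
  (0 < k * l)%N -> gridnorm R k l A S ^+ (k * l) = gridE R k l A S.
Proof.
move=> kl_gt0; rewrite -powR_mulrn ?powR_ge0 // -powRrM mul1r mulVf ?powRr1 //.
  exact: gridE_ge0.
by rewrite pnatr_eq0 -lt0n.
Qed.

Lemma gridnorm_ge k l S c : 0 <= c -> (0 < k * l)%N ->
  (c <= gridnorm R k l A S) = (c ^+ (k * l) <= gridE R k l A S).
Proof.
move=> c_ge0 kl_gt0; rewrite -gridnormXn // ler_pXn2r // nnegrE //.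
exact: powR_ge0.
Qed.

Lemma deg_Ycol x : deg R A x = #|Ycol A x|%:R / #|Y|%:R.
Proof. by rewrite /deg sumr_indicator. Qed.

Lemma deg_ge0 x : 0 <= deg R A x.
Proof. by rewrite deg_Ycol divr_ge0. Qed.

Lemma deg_le1 x : (0 < #|Y|)%N -> deg R A x <= 1.
Proof.
by move=> Y_gt0; rewrite deg_Ycol ler_pdivrMr ?mul1r ?ltr0n // ler_nat max_card.
Qed.

Lemma deg_gridE_Ycol k l x : (0 < #|X|)%N -> (0 < #|Y|)%N -> (0 < l)%N ->
  deg R A x ^+ l * gridE R k l A (Ycol A x)
    = gridsum k l (Ycol A x) / (#|X|%:R ^+ k * #|Y|%:R ^+ l).
Proof.
move=> X_gt0 Y_gt0 l_gt0; rewrite gridEE deg_Ycol.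
have [Yx_eq0 | Yx_gt0] := posnP #|Ycol A x|.
  suff -> : gridsum k l (Ycol A x) = 0 by rewrite Yx_eq0 !mul0r mulr0.
  apply/eqP; rewrite eq_le gridsum_ge0 andbT.
  by rewrite (le_trans (gridsum_le _ _ _)) // Yx_eq0 expr0n eqn0Ngt l_gt0 mulr0.
have nz n : (0 < n)%N -> (n%:R : R) != 0 by rewrite pnatr_eq0 -lt0n.
by rewrite expr_div_n; field; rewrite !expf_neq0 ?nz.
Qed.

Lemma sum_deg_gridE_Ycol k l : (0 < #|X|)%N -> (0 < #|Y|)%N -> (0 < l)%N ->
  \sum_x deg R A x ^+ l * gridE R k l A (Ycol A x)
    = #|X|%:R * gridE R k.+1 l A [set: Y].
Proof.
move=> X_gt0 Y_gt0 l_gt0.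
under eq_bigr do rewrite deg_gridE_Ycol //.
rewrite -mulr_suml -gridsum_cons gridEE cardsT exprS.
have nz n : (0 < n)%N -> (n%:R : R) != 0 by rewrite pnatr_eq0 -lt0n.
by field; rewrite !expf_neq0 ?nz.
Qed.

Lemma deg_gridE_Ycol_le (delta eps : R) k l x :
  (0 < #|Y|)%N -> 0 < delta -> 0 <= eps -> (0 < l)%N ->
  ((0 < k)%N -> delta ^+ k.+1 <= deg R A x ->
     gridnorm R k l A (Ycol A x) < (1 + eps) * delta) ->
  deg R A x ^+ l * gridE R k l A (Ycol A x)
    <= (1 + eps) ^+ (k * l) * delta ^+ (k.+1 * l) + (delta <= deg R A x)%R%:R.
Proof.
move=> Y_gt0 delta_gt0 eps_ge0 l_gt0 small_norm.
have deg0 := deg_ge0 x; have deg1 := deg_le1 x Y_gt0.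
have grid0 := gridE_ge0 k l (Ycol A x); have grid1 := gridE_le1 k l (Ycol A x).
have delta0 := ltW delta_gt0.
have eps1 n : 1 <= (1 + eps) ^+ n by rewrite exprn_ege1 // lerDl.
have [deg_big | deg_small] := lerP delta (deg R A x).
  apply: le_trans (_ : 1 <= _); first by rewrite mulr_ile1 ?exprn_ge0 ?exprn_ile1.
  by rewrite lerDr mulr_ge0 ?exprn_ge0 ?addr_ge0.
rewrite addr0.
have [deg_tiny | deg_mid] := ltP (deg R A x) (delta ^+ k.+1).
  apply: le_trans (ler_piMr (exprn_ge0 _ deg0) grid1) _.
  apply: le_trans (_ : (delta ^+ k.+1) ^+ l <= _).
    by rewrite lerXn2r ?nnegrE ?exprn_ge0 // ltW.
  by rewrite -exprM ler_peMl ?exprn_ge0.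
have k_gt0 : (0 < k)%N.
  by rewrite lt0n; apply: contraTneq deg_mid => ->; rewrite expr1 -ltNge.
have kl_gt0 : (0 < k * l)%N by rewrite muln_gt0 k_gt0.
have := small_norm k_gt0 deg_mid.
rewrite ltNge gridnorm_ge ?mulr_ge0 ?addr_ge0 // -ltNge => /ltW grid_small.
have deg_l : deg R A x ^+ l <= delta ^+ l by rewrite lerXn2r ?nnegrE // ltW.
apply: le_trans (ler_pM (exprn_ge0 _ deg0) grid0 deg_l grid_small) _.
by rewrite exprMn mulSn exprD mulrCA.
Qed.

End GridNorm.

Theorem lemma4p2 (R : realType) (X Y : finType) (A : X -> Y -> bool)
    (delta eps : R) (k l : nat) :
  (0 < #|X|)%N -> (0 < #|Y|)%N -> 0 < delta -> 0 < eps ->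
  (1 <= k)%N -> (1 <= l)%N ->
  (1 + eps) * delta <= gridnorm R k l A [set: Y] ->
  eps / 2 * delta ^+ (k * l) * #|X|%:R
    <= #|[set x : X | delta <= deg R A x]|%:R
  \/ ((1 < k)%N /\
      exists x : X, delta ^+ k <= deg R A x /\
        (1 + eps) * delta <= gridnorm R k.-1 l A (Ycol A x)).
Proof.
move=> X_gt0 Y_gt0 delta_gt0 eps_gt0 k_ge1 l_gt0.
case: k k_ge1 => // k _ /= norm_large.
have kl_gt0 : (0 < k.+1 * l)%N by rewrite muln_gt0.
have c_ge0 : 0 <= (1 + eps) * delta by rewrite mulr_ge0 ?addr_ge0 ?ltW.
rewrite gridnorm_ge // in norm_large.
set rich := [exists x, (delta ^+ k.+1 <= deg R A x) &&
  ((1 + eps) * delta <= gridnorm R k l A (Ycol A x))].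
have [/andP [k_gt0 /existsP [x /andP [deg_x norm_x]]] | not_rich] :=
  boolP ((0 < k)%N && rich).
  by right; split=> //; exists x.
left.
set B := (1 + eps) ^+ (k * l) * delta ^+ (k.+1 * l).
have term_le x :
    deg R A x ^+ l * gridE R k l A (Ycol A x) <= B + (delta <= deg R A x)%R%:R.
  apply: deg_gridE_Ycol_le => // [|k_gt0 deg_x]; first exact: ltW.
  rewrite ltNge; apply: contra not_rich => norm_x.
  by rewrite k_gt0; apply/existsP; exists x; rewrite deg_x.
have mass : #|X|%:R * gridE R k.+1 l A [set: Y]
    <= B * #|X|%:R + #|[set x | delta <= deg R A x]|%:R.
  rewrite -sum_deg_gridE_Ycol //.
  apply: le_trans (ler_sum _ (fun x _ => term_le x)) _.
  by rewrite big_split /= sumr_const sumr_indicator mulr_natr.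
have gap := @expr1D_gap R eps (k * l) l (ltW eps_gt0) l_gt0.
rewrite exprMn /B mulSn in norm_large mass *.
have D_ge0 : 0 <= delta ^+ (l + k * l) by rewrite exprn_ge0 ?ltW.
have n_gt0 : 0 < (#|X|%:R : R) by rewrite ltr0n.
have := ler_wpM2l (mulr_ge0 (ltW n_gt0) D_ge0) gap.
have := ler_wpM2l (ltW n_gt0) norm_large.
have := mulr_ge0 (mulr_ge0 (ltW n_gt0) D_ge0) (ltW eps_gt0).
nra.
Qed.
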